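(* Let $G$ be a group, $\nu$ a conjugation-invariant pseudo-norm on $G$, and $H,K$ subgroups of $G$ such that $(G,H)$ satisfies the property $\mathsf{FM}$. Then for any $g\in G$ and any $f\in K$, \[ \nu([g,f])\le 4E_{H,\nu}(K), \] where $[g,f]=gfg^{-1}f^{-1}$.
   Context: A conjugation-invariant pseudo-norm on a group $G$ is a function $\nu\colon G\to\mathbb{R}_{\ge0}$ with $\nu(1)=0$, $\nu(f)=\nu(f^{-1})$, $\nu(fg)\le\nu(f)+\nu(g)$ and $\nu(gfg^{-1})=\nu(f)$ for all $f,g\in G$. For a subgroup $H\le G$, $\nu_H(f)$ is the minimal $k$ such that $f=g_1h_1g_1^{-1}\cdots g_kh_kg_k^{-1}$ ($g_i\in G,h_i\in H$), $\infty$ if none. For $K\subset G$, $\mathrm{D}^f_H(K)$ is the set of $h_0\in G$ such that for all $g_1,\dots,g_k\in G$ there is $h\in G$ with every element of $hh_0h^{-1}K(hh_0h^{-1})^{-1}$ commuting with every element of $g_1Hg_1^{-1}\cup\dots\cup g_kHg_k^{-1}$; $E_{H,\nu}(K)=\inf_{h_0\in\mathrm{D}^f_H(K)}\nu(h_0)$ (infimum of the empty set being $+\infty$). $(G,H)$ satisfies $\mathsf{FM}$ if $\nu_H<\infty$ on $G$ and $\mathrm{D}^f_H(h_1Hh_1^{-1}\cup\dots\cup h_kHh_k^{-1})\ne\emptyset$ for all $h_1,\dots,h_k\in G$. *)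

From Stdlib Require Import Reals List.
From Coquelicot Require Import Rbar Lub.
Open Scope R_scope.

Record Group := {
  carrier :> Type;
  gmul : carrier -> carrier -> carrier;
  gone : carrier;
  ginv : carrier -> carrier;
  gmulA : forall x y z, gmul x (gmul y z) = gmul (gmul x y) z;
  gmul1l : forall x, gmul gone x = x;
  gmulVl : forall x, gmul (ginv x) x = gone
}.

Arguments gmul {g} _ _.
Arguments gone {g}.
Arguments ginv {g} _.

Definition conjg {G : Group} (g f : G) : G := gmul (gmul g f) (ginv g).

Definition commg {G : Group} (g f : G) : G :=
  gmul (gmul (gmul g f) (ginv g)) (ginv f).

Definition is_subgroup {G : Group} (H : G -> Prop) : Prop :=
  H gone /\ (forall x y, H x -> H y -> H (gmul x y)) /\ (forall x, H x -> H (ginv x)).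

Definition is_ci_pseudonorm {G : Group} (nu : G -> R) : Prop :=
  (forall f, 0 <= nu f) /\
  nu gone = 0 /\
  (forall f, nu f = nu (ginv f)) /\
  (forall f g, nu (gmul f g) <= nu f + nu g) /\
  (forall f g, nu (conjg g f) = nu f).

Definition conj_prod {G : Group} (l : list (G * G)) : G :=
  fold_right (fun p acc => gmul (conjg (fst p) (snd p)) acc) gone l.

(* nu_H(f) < infinity *)
Definition nuH_finite {G : Group} (H : G -> Prop) (f : G) : Prop :=
  exists l : list (G * G), Forall (fun p => H (snd p)) l /\ f = conj_prod l.

Definition in_conj_union {G : Group} (H : G -> Prop) (gs : list G) (y : G) : Prop :=
  exists g h, In g gs /\ H h /\ y = conjg g h.

Definition Df {G : Group} (H K : G -> Prop) (h0 : G) : Prop :=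
  forall gs : list G, exists h : G,
    forall x y, K x -> in_conj_union H gs y ->
      gmul (conjg (conjg h h0) x) y = gmul y (conjg (conjg h h0) x).

(* E_{H,nu}(K) = inf_{h0 in D^f_H(K)} nu(h0), +oo if empty *)
Definition E_Hnu {G : Group} (H : G -> Prop) (nu : G -> R) (K : G -> Prop) : Rbar :=
  Glb_Rbar (fun r => exists h0, Df H K h0 /\ r = nu h0).

Definition FM {G : Group} (H : G -> Prop) : Prop :=
  (forall f : G, nuH_finite H f) /\
  (forall hs : list G, exists h0, Df H (in_conj_union H hs) h0).

(* Since (G, H) satisfies FM, g is a product of conjugates of elements of H.
   If h0 lies in D^f_H(K), some conjugate u of h0 makes c := u f u^-1 commute
   with every factor of that product, hence with g.  Then
     [g, f] = (g u^-1 g^-1) (c [g, u] c^-1) u,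
   and each of the three factors has norm at most nu(u) = nu(h0), the middle
   one twice over; taking the infimum over h0 gives the bound 4 E_{H,nu}(K). *)

From Stdlib Require Import Reals List Lra.
From Coquelicot Require Import Rbar Lub.

Section GroupFacts.
Variable G : Group.
Implicit Types x y z : G.

Lemma mulgA' x y z : gmul (gmul x y) z = gmul x (gmul y z).
Proof. now rewrite gmulA. Qed.

Lemma mulgV x : gmul x (ginv x) = gone.
Proof.
  rewrite <- (gmul1l _ (gmul x (ginv x))), <- (gmulVl _ (ginv x)).
  now rewrite mulgA', (gmulA _ (ginv x) x), gmulVl, gmul1l.
Qed.

Lemma mulg1 x : gmul x gone = x.
Proof. now rewrite <- (gmulVl _ x), gmulA, mulgV, gmul1l. Qed.

Lemma mulKg x y : gmul (ginv x) (gmul x y) = y.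
Proof. now rewrite gmulA, gmulVl, gmul1l. Qed.

Lemma mulKVg x y : gmul x (gmul (ginv x) y) = y.
Proof. now rewrite gmulA, mulgV, gmul1l. Qed.

Lemma invgK x : ginv (ginv x) = x.
Proof. now rewrite <- (mulg1 (ginv (ginv x))), <- (gmulVl _ x), mulKg. Qed.

Lemma invMg x y : ginv (gmul x y) = gmul (ginv y) (ginv x).
Proof.
  assert (E : gmul (gmul x y) (gmul (ginv y) (ginv x)) = gone)
    by now rewrite mulgA', mulKVg, mulgV.
  now rewrite <- (mulg1 (ginv (gmul x y))), <- E, mulKg.
Qed.

Lemma commute_conj_prod (H : G -> Prop) (c : G) (l : list (G * G)) :
  Forall (fun p => H (snd p)) l ->
  (forall y, in_conj_union H (map fst l) y -> gmul c y = gmul y c) ->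
  gmul c (conj_prod l) = gmul (conj_prod l) c.
Proof.
  induction l as [|[a b] l IH]; intros Hl Hc; simpl.
  - now rewrite gmul1l, mulg1.
  - inversion Hl as [|? ? Hb Hl']; subst.
    assert (Ehead : gmul c (conjg a b) = gmul (conjg a b) c)
      by (apply Hc; exists a, b; simpl; auto).
    assert (Etail : gmul c (conj_prod l) = gmul (conj_prod l) c).
    { apply IH; [exact Hl'|].
      intros y [g [h [Hg [Hh ->]]]]; apply Hc; exists g, h; simpl; auto. }
    now rewrite gmulA, Ehead, mulgA', Etail, gmulA.
Qed.

Lemma commg_factor (g f u : G) :
  gmul (conjg u f) g = gmul g (conjg u f) ->
  commg g f =
    gmul (gmul (conjg g (ginv u)) (conjg (conjg u f) (commg g u))) u.
Proof.
  unfold commg, conjg; intro Hcomm. rewrite !mulgA' in Hcomm.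
  assert (Hshift : forall z, gmul u (gmul f (gmul (ginv u) (gmul g z))) =
                             gmul g (gmul u (gmul f (gmul (ginv u) z)))).
  { intro z. transitivity (gmul (gmul u (gmul f (gmul (ginv u) g))) z).
    - now rewrite !mulgA'.
    - now rewrite Hcomm, !mulgA'. }
  rewrite !invMg, !invgK, !mulgA', !mulKg, gmulVl, mulg1.
  now rewrite Hshift, !mulKg.
Qed.

End GroupFacts.

Section PseudoNorm.
Variables (G : Group) (nu : G -> R).
Hypothesis Hnu : is_ci_pseudonorm nu.

Lemma nu_invg (x : G) : nu (ginv x) = nu x.
Proof. destruct Hnu as (_ & _ & NV & _). symmetry; apply NV. Qed.

Lemma nu_mulg (x y : G) : nu (gmul x y) <= nu x + nu y.
Proof. destruct Hnu as (_ & _ & _ & NT & _). apply NT. Qed.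

Lemma nu_conjg (g x : G) : nu (conjg g x) = nu x.
Proof. destruct Hnu as (_ & _ & _ & _ & NC). apply NC. Qed.

Lemma nu_commg_le (g u : G) : nu (commg g u) <= 2 * nu u.
Proof.
  pose proof (nu_mulg (conjg g u) (ginv u)).
  rewrite nu_conjg, nu_invg in *. unfold commg, conjg in *. lra.
Qed.

Lemma nu_commg_le_of_commute (g f u : G) :
  gmul (conjg u f) g = gmul g (conjg u f) -> nu (commg g f) <= 4 * nu u.
Proof.
  intro Hcomm. rewrite (commg_factor G g f u Hcomm).
  set (c := conjg u f).
  pose proof (nu_mulg (gmul (conjg g (ginv u)) (conjg c (commg g u))) u).
  pose proof (nu_mulg (conjg g (ginv u)) (conjg c (commg g u))).
  pose proof (nu_commg_le g u).
  rewrite !nu_conjg, nu_invg in *. lra.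
Qed.

Lemma nu_commg_le_Df (H K : G -> Prop) (g f h0 : G) :
  nuH_finite H g -> K f -> Df H K h0 -> nu (commg g f) <= 4 * nu h0.
Proof.
  intros [l [Hl ->]] Kf HD.
  destruct (HD (map fst l)) as [h Hh].
  rewrite <- (nu_conjg h h0).
  apply nu_commg_le_of_commute, (commute_conj_prod G H); [exact Hl|].
  intros y Hy. now apply Hh.
Qed.

End PseudoNorm.

Lemma Rbar_le_mult_Glb (E : R -> Prop) (a c : R) :
  0 < c -> (forall r, E r -> a <= c * r) ->
  Rbar_le (Finite a) (Rbar_mult (Finite c) (Glb_Rbar E)).
Proof.
  intros Hc Hbound.
  destruct (Glb_Rbar_correct E) as [_ Hgreatest].
  assert (Hlb : Rbar_le (Finite (a / c)) (Glb_Rbar E)).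
  { apply Hgreatest. intros r Er. simpl.
    apply Rmult_le_reg_l with c; [exact Hc|].
    field_simplify; [now apply Hbound | lra]. }
  destruct (Glb_Rbar E) as [r | | ]; simpl in *.
  - apply Rmult_le_reg_l with (/ c); [now apply Rinv_0_lt_compat|].
    field_simplify; lra.
  - unfold Rbar_mult'.
    destruct (Rle_dec 0 c) as [p|p]; [|lra].
    destruct (Rle_lt_or_eq_dec 0 c p); [exact I|lra].
  - contradiction.
Qed.

Theorem lemma2p6 (G : Group) (nu : G -> R) (H K : G -> Prop)
  (Hnu : is_ci_pseudonorm nu) (HH : is_subgroup H) (HK : is_subgroup K)
  (HFM : FM H) :
  forall g f : G, K f ->
    Rbar_le (Finite (nu (commg g f))) (Rbar_mult (Finite 4) (E_Hnu H nu K)).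
Proof.
  intros g f Kf.
  destruct HFM as [Hnormal _].
  apply Rbar_le_mult_Glb; [lra|].
  intros r [h0 [HD ->]].
  exact (nu_commg_le_Df G nu Hnu H K g f h0 (Hnormal g) Kf HD).
Qed.
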